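(* Let $T$ be an Aronszajn tree and let $A\subseteq T$ be an uncountable antichain. Then there is an infinite chain $C\subseteq T$ such that every element of $C$ is the meet $a\wedge b$ of two distinct elements $a,b\in A$.
   Context: Trees are taken to be subsets $T\subseteq{}^{<\omega_1}\omega$ (functions from countable ordinals to $\omega$) that are closed under initial segments, ordered by $s<_T t$ iff $t$ properly extends $s$. Such a $T$ is an Aronszajn tree if it is uncountable, each level (set of elements with a given domain) is countable, and it has no uncountable chain (branch). For $s,t\in T$ the meet $s\wedge t$ is the longest common initial segment of $s$ and $t$ (an element of $T$). An antichain is a set of pairwise $<_T$-incomparable elements; a chain is a set of pairwise comparable elements. *)

(* Trees are subsets of ^{<omega_1} omega. *)
From Stdlib Require Import List.

(* omega_1 is presented abstractly as a type O with a strict order lt that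
   is a well-order, uncountable, and all of whose proper initial segments are
   countable; this characterizes omega_1 up to isomorphism. *)

Definition countable_type (X : Type) : Prop :=
  exists f : X -> nat, forall x y, f x = f y -> x = y.

Definition is_omega1 (O : Type) (lt : O -> O -> Prop) : Prop :=
  (forall a, ~ lt a a) /\
  (forall a b c, lt a b -> lt b c -> lt a c) /\
  (forall a b, lt a b \/ a = b \/ lt b a) /\
  well_founded lt /\
  ~ countable_type O /\
  (forall a, exists f : O -> nat,
      forall x y, lt x a -> lt y a -> f x = f y -> x = y).

Section Trees.
Variable O : Type.
Variable lt : O -> O -> Prop.

(* A node (alpha, s) stands for the function s restricted to
   {beta | beta < alpha}; it is normalized when s is 0 outside its domain,
   so that Leibniz equality of normalized nodes is equality of functions. *)
Definition node : Type := (O * (O -> nat))%type.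

Definition dom (s : node) : O := fst s.

Definition normalized (s : node) : Prop :=
  forall b, ~ lt b (fst s) -> snd s b = 0.

Definition node_lt (s t : node) : Prop :=
  lt (fst s) (fst t) /\ forall b, lt b (fst s) -> snd s b = snd t b.

Definition node_le (s t : node) : Prop := s = t \/ node_lt s t.

Definition countable (P : node -> Prop) : Prop :=
  exists f : node -> nat, forall x y, P x -> P y -> f x = f y -> x = y.

Definition uncountable (P : node -> Prop) : Prop := ~ countable P.

Definition infinite (P : node -> Prop) : Prop :=
  forall l : list node, exists x, P x /\ ~ In x l.

Definition subset (P Q : node -> Prop) : Prop := forall x, P x -> Q x.

Definition is_chain (C : node -> Prop) : Prop :=
  forall x y, C x -> C y -> x = y \/ node_lt x y \/ node_lt y x.

Definition is_antichain (A : node -> Prop) : Prop :=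
  forall x y, A x -> A y -> x <> y -> ~ node_lt x y /\ ~ node_lt y x.

Definition is_tree (T : node -> Prop) : Prop :=
  (forall s, T s -> normalized s) /\
  (forall s t, normalized s -> node_lt s t -> T t -> T s).

Definition level (T : node -> Prop) (a : O) : node -> Prop :=
  fun s => T s /\ fst s = a.

Definition aronszajn (T : node -> Prop) : Prop :=
  is_tree T /\ uncountable T /\ (forall a, countable (level T a)) /\
  (forall B, subset B T -> is_chain B -> countable B).

Definition is_meet (s t m : node) : Prop :=
  normalized m /\ node_le m s /\ node_le m t /\
  (forall u, normalized u -> node_le u s -> node_le u t -> node_le u m).

End Trees.
Arguments node : clear implicits.

From Stdlib Require Import List Arith Lia Cantor FinFun Classical ClassicalEpsilon
  ChoiceFacts FunctionalExtensionality.

(* Call a node rich for an uncountable B if uncountably many elements of B lie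
   above it. The rich nodes cannot all be pairwise comparable: they would form a
   chain, hence a countable set of bounded height d, and B would be covered by
   the countably many nodes of height below d and the countably many cones above
   the nodes of level d, each containing only countably many elements of B.
   So there are incomparable rich nodes u and v; for a above u and b above v in
   B, the meet of a and b lies strictly below u, and the elements of B above u
   again form an uncountable set. Repeating this inside ever smaller cones gives
   meets c0 < c1 < ..., since each later meet is taken of two nodes above the
   previous u, which lies strictly above the previous meet. *)

Definition countable_pred {Z : Type} (P : Z -> Prop) : Prop :=
  exists f : Z -> nat, forall x y, P x -> P y -> f x = f y -> x = y.

Section Countable.
Variable Z : Type.

Lemma countable_pred_sub (P Q : Z -> Prop) :
  countable_pred Q -> (forall x, P x -> Q x) -> countable_pred P.
Proof. intros [f Hf] HPQ. exists f. intros x y Hx Hy. apply Hf; auto. Qed.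

Lemma uncountable_pred_inhabited (P : Z -> Prop) : ~ countable_pred P -> exists x, P x.
Proof.
  intros HP. apply NNPP. intros Hno. apply HP.
  exists (fun _ => 0). intros x y Hx. exfalso. eauto.
Qed.

Lemma countable_pred_eq (a : Z) : countable_pred (fun x => x = a).
Proof. exists (fun _ => 0). intros x y -> ->. reflexivity. Qed.

(* Code a point by the pair (index of its fiber, index inside the fiber). *)
Lemma countable_pred_fibers {X : Type} (P : Z -> Prop) (k : Z -> X) (Q : X -> Prop) :
  (forall y, P y -> Q (k y)) -> countable_pred Q ->
  (forall x, Q x -> countable_pred (fun y => P y /\ k y = x)) -> countable_pred P.
Proof.
  intros HPQ [g Hg] Hfib.
  assert (Hcode : forall x, exists h : Z -> nat, Q x ->
      forall y1 y2, P y1 /\ k y1 = x -> P y2 /\ k y2 = x -> h y1 = h y2 -> y1 = y2).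
  { intros x. destruct (classic (Q x)) as [Hq|Hq].
    - destruct (Hfib x Hq) as [h Hh]. exists h. auto.
    - exists (fun _ => 0). contradiction. }
  destruct (choice _ Hcode) as [h Hh].
  exists (fun y => to_nat (g (k y), h (k y) y)).
  intros y1 y2 Hy1 Hy2 Heq.
  apply (f_equal of_nat) in Heq. rewrite !cancel_of_to in Heq.
  injection Heq as Hg12 Hh12.
  assert (Hk : k y1 = k y2) by (apply Hg; auto).
  rewrite Hk in Hh12. apply (Hh (k y2)); auto.
Qed.

Lemma countable_pred_or (P Q : Z -> Prop) :
  countable_pred P -> countable_pred Q -> countable_pred (fun x => P x \/ Q x).
Proof.
  intros HP HQ.
  apply (countable_pred_fibers _
    (fun x => if excluded_middle_informative (P x) then true else false) (fun _ => True)).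
  - auto.
  - exists (fun b : bool => if b then 0 else 1). intros [|] [|] _ _ E; congruence.
  - intros [|] _; [apply (countable_pred_sub _ P) | apply (countable_pred_sub _ Q)]; auto;
      intros x [Hx E]; destruct (excluded_middle_informative (P x)); tauto || discriminate.
Qed.

End Countable.

Lemma well_founded_minimal {X : Type} (R : X -> X -> Prop) (P : X -> Prop) x :
  well_founded R -> P x -> exists m, P m /\ forall y, P y -> ~ R y m.
Proof.
  intros Hwf Hx. apply NNPP. intros Hno.
  assert (Hnone : forall z, ~ P z).
  { intros z. induction z as [z IH] using (well_founded_ind Hwf).
    intros Pz. apply Hno. exists z. split; auto. intros y Py Ry. exact (IH y Ry Py). }
  exact (Hnone x Hx).
Qed.

Lemma dependent_choice_on {X : Type} (I : X -> Prop) (R : X -> X -> Prop) x0 :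
  I x0 -> (forall x, I x -> exists y, I y /\ R x y) ->
  exists f : nat -> X, forall n, I (f n) /\ R (f n) (f (S n)).
Proof.
  intros Hx0 Hstep.
  destruct (functional_choice_imp_functional_dependent_choice choice
    (fun x y : {x | I x} => R (proj1_sig x) (proj1_sig y))) with (exist _ x0 Hx0) as [g [_ Hg]].
  - intros [x Hx]. destruct (Hstep x Hx) as [y [Hy Rxy]]. exists (exist _ y Hy). exact Rxy.
  - exists (fun n => proj1_sig (g n)). intros n. split; [apply proj2_sig | apply Hg].
Qed.

Section Nodes.
Variables (O : Type) (lt : O -> O -> Prop).
Hypothesis lt_irrefl : forall a, ~ lt a a.
Hypothesis lt_trans : forall a b c, lt a b -> lt b c -> lt a c.
Hypothesis lt_total : forall a b, lt a b \/ a = b \/ lt b a.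

Local Notation nlt := (node_lt O lt).
Local Notation nle := (node_le O lt).
Local Notation norm := (normalized O lt).

Definition comparable (x y : node O) : Prop := x = y \/ nlt x y \/ nlt y x.

Definition cone (B : node O -> Prop) (u : node O) : node O -> Prop :=
  fun x => B x /\ nle u x.

Lemma node_ext (x y : node O) : norm x -> norm y ->
  fst x = fst y -> (forall b, lt b (fst x) -> snd x b = snd y b) -> x = y.
Proof.
  destruct x as [dx sx], y as [dy sy]; unfold normalized; simpl.
  intros Nx Ny <- Hagree. f_equal. apply functional_extensionality. intros b.
  destruct (classic (lt b dx)); auto. rewrite Nx, Ny; auto.
Qed.

Lemma node_le_agree (x z : node O) : nle x z ->
  (fst x = fst z \/ lt (fst x) (fst z)) /\ forall b, lt b (fst x) -> snd x b = snd z b.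
Proof. intros [<-|[Hd Hv]]; auto. Qed.

Lemma node_lt_irrefl x : ~ nlt x x.
Proof. intros [H _]. exact (lt_irrefl _ H). Qed.

Lemma node_lt_trans x y z : nlt x y -> nlt y z -> nlt x z.
Proof.
  intros [Hxy Vxy] [Hyz Vyz]. split; eauto.
  intros b Hb. rewrite Vxy by auto. apply Vyz. eauto.
Qed.

Lemma node_lt_le_trans x y z : nlt x y -> nle y z -> nlt x z.
Proof. intros H [<-|H']; eauto using node_lt_trans. Qed.

Lemma node_le_trans x y z : nle x y -> nle y z -> nle x z.
Proof. intros [<-|H] H'; auto. right. eauto using node_lt_le_trans. Qed.

Lemma node_le_common_comparable x y z :
  norm x -> norm y -> nle x z -> nle y z -> comparable x y.
Proof.
  intros Nx Ny Hx Hy.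
  apply node_le_agree in Hx as [Dx Vx]. apply node_le_agree in Hy as [Dy Vy].
  destruct (lt_total (fst x) (fst y)) as [L|[E|L]].
  - right; left. split; auto. intros b Hb. rewrite Vx, Vy; eauto.
  - left. apply node_ext; auto. intros b Hb. rewrite Vx, Vy; congruence.
  - right; right. split; auto. intros b Hb. rewrite Vx, Vy; eauto.
Qed.

Lemma tree_le_closed (T : node O -> Prop) x y :
  is_tree O lt T -> norm x -> nle x y -> T y -> T x.
Proof. intros [_ Hdown] Nx [<-|H] Ty; eauto. Qed.

Definition restr (d : O) (s : node O) : node O :=
  (d, fun b => if excluded_middle_informative (lt b d) then snd s b else 0).

Lemma restr_normalized d s : norm (restr d s).
Proof. intros b Hb. simpl in *. destruct (excluded_middle_informative (lt b d)); tauto. Qed.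

Lemma restr_agree d s b : lt b d -> snd (restr d s) b = snd s b.
Proof. intros H. simpl. destruct (excluded_middle_informative (lt b d)); tauto. Qed.

Lemma restr_le d a : norm a -> ~ lt (fst a) d -> nle (restr d a) a.
Proof.
  intros Na H. destruct (lt_total d (fst a)) as [L|[E|L]]; [|left|contradiction].
  - right. split; auto. apply restr_agree.
  - apply node_ext; auto using restr_normalized. apply restr_agree.
Qed.

(* The meet is the restriction to the least ordinal where a and b stop agreeing. *)
Lemma meet_exists a b : well_founded lt -> norm a -> norm b -> exists m, is_meet O lt a b m.
Proof.
  intros Hwf Na Nb.
  pose (split_at := fun x => ~ (lt x (fst a) /\ lt x (fst b) /\ snd a x = snd b x)).
  destruct (well_founded_minimal lt split_at (fst a)) as [d [Hd Hmin]]; auto.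
  { intros [H _]. exact (lt_irrefl _ H). }
  assert (Hbelow : forall x, lt x d -> lt x (fst a) /\ lt x (fst b) /\ snd a x = snd b x).
  { intros x Hx. apply NNPP. intros Hn. exact (Hmin x Hn Hx). }
  assert (Had : ~ lt (fst a) d) by (intros H; apply (lt_irrefl (fst a)), Hbelow, H).
  assert (Hbd : ~ lt (fst b) d) by (intros H; apply (lt_irrefl (fst b)), Hbelow, H).
  assert (Hsame : restr d a = restr d b).
  { apply node_ext; auto using restr_normalized. intros x Hx.
    rewrite !restr_agree by exact Hx. apply Hbelow, Hx. }
  exists (restr d a). split; [apply restr_normalized|].
  split; [apply restr_le; auto|]. split; [rewrite Hsame; apply restr_le; auto|].
  intros u Nu Hua Hub.
  apply node_le_agree in Hua as [Dua Vua]. apply node_le_agree in Hub as [Dub Vub].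
  destruct (lt_total d (fst u)) as [L|[E|L]].
  - exfalso. apply Hd. split; [|split].
    + destruct Dua as [<-|]; eauto.
    + destruct Dub as [<-|]; eauto.
    + rewrite <- Vua, <- Vub; auto.
  - left. apply node_ext; auto using restr_normalized.
    intros x Hx. rewrite restr_agree by congruence. auto.
  - right. split; auto. intros x Hx. rewrite restr_agree by eauto. auto.
Qed.

Lemma node_lt_increasing (c : nat -> node O) :
  (forall n, nlt (c n) (c (S n))) -> forall m n, m < n -> nlt (c m) (c n).
Proof.
  intros Hc m n Hmn. induction Hmn as [|n Hmn IH]; eauto using node_lt_trans.
Qed.

Lemma increasing_range_infinite_chain (c : nat -> node O) :
  (forall n, nlt (c n) (c (S n))) ->
  is_chain O lt (fun x => exists n, x = c n) /\ infinite O (fun x => exists n, x = c n).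
Proof.
  intros Hc. pose proof (node_lt_increasing c Hc) as Hinc. split.
  - intros x y [m ->] [n ->]. destruct (Nat.lt_total m n) as [L|[->|L]]; auto.
  - assert (Hinj : Injective c).
    { intros m n E. destruct (Nat.lt_total m n) as [L|[L|L]]; auto; exfalso;
        apply (node_lt_irrefl (c n)); [rewrite <- E at 1|rewrite <- E at 2]; auto. }
    intros l. apply NNPP. intros Hfin.
    assert (Hin : forall n, In (c n) l).
    { intros n. apply NNPP. intros Hn. apply Hfin. exists (c n). eauto. }
    assert (Hnd : NoDup (map c (seq 0 (S (length l))))).
    { apply Injective_map_NoDup; auto using seq_NoDup. }
    apply NoDup_incl_length with (l' := l) in Hnd.
    + rewrite length_map, length_seq in Hnd. lia.
    + intros x Hx. apply in_map_iff in Hx as [n [<- _]]. apply Hin.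
Qed.

End Nodes.

Section Aronszajn.
Variables (O : Type) (lt : O -> O -> Prop).
Hypothesis HO : is_omega1 O lt.

Let lt_irrefl : forall a, ~ lt a a := proj1 HO.
Let lt_trans : forall a b c, lt a b -> lt b c -> lt a c := proj1 (proj2 HO).
Let lt_total : forall a b, lt a b \/ a = b \/ lt b a := proj1 (proj2 (proj2 HO)).
Let lt_wf : well_founded lt := proj1 (proj2 (proj2 (proj2 HO))).
Let O_uncountable : ~ countable_type O := proj1 (proj2 (proj2 (proj2 (proj2 HO)))).
Let initial_segment_countable : forall a, countable_pred (fun x => lt x a) :=
  proj2 (proj2 (proj2 (proj2 (proj2 HO)))).

Local Notation nlt := (node_lt O lt).
Local Notation nle := (node_le O lt).
Local Notation norm := (normalized O lt).

Lemma omega1_le_countable a : countable_pred (fun d => d = a \/ lt d a).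
Proof. apply countable_pred_or; auto using countable_pred_eq. Qed.

(* Otherwise every ordinal lies below some f s, and O would be a countable
   union of countable initial segments. *)
Lemma omega1_bounded {Z : Type} (f : Z -> O) (S : Z -> Prop) :
  countable_pred S -> exists d, forall s, S s -> lt (f s) d.
Proof.
  intros HS. apply NNPP. intros Hunb.
  assert (Hcof : forall d, exists s, S s /\ ~ lt (f s) d).
  { intros d. apply NNPP. intros Hn. apply Hunb. exists d. intros s Hs.
    apply NNPP. intros Hl. apply Hn. eauto. }
  destruct (choice _ Hcof) as [k Hk].
  assert (Hall : countable_pred (fun _ : O => True)).
  { apply (countable_pred_fibers _ _ k S); [intros d _; apply Hk | exact HS |].
    intros s _. apply (countable_pred_sub _ _ _ (omega1_le_countable (f s))).
    intros d [_ <-]. destruct (Hk d) as [_ Hd].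
    destruct (lt_total d (f (k d))) as [|[|]]; tauto. }
  apply O_uncountable. destruct Hall as [g Hg]. exists g. intros x y. apply Hg; auto.
Qed.

Variable T : node O -> Prop.
Hypothesis HT : aronszajn O lt T.

Let T_tree : is_tree O lt T := proj1 HT.
Let T_levels : forall a, countable O (level O T a) := proj1 (proj2 (proj2 HT)).
Let T_chains : forall B, subset O B T -> is_chain O lt B -> countable O B :=
  proj2 (proj2 (proj2 HT)).

Lemma tree_below_height_countable d : countable O (fun x => T x /\ lt (fst x) d).
Proof.
  apply (countable_pred_fibers _ _ fst (fun a => lt a d)).
  - intros x [_ Hx]. exact Hx.
  - apply initial_segment_countable.
  - intros a _. apply (countable_pred_sub _ _ _ (T_levels a)).
    intros x [[Tx _] Ex]. split; auto.
Qed.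

Lemma tree_above_height_countable (B : node O -> Prop) d :
  subset O B T -> (forall r, level O T d r -> countable O (cone O lt B r)) ->
  countable O (fun x => B x /\ ~ lt (fst x) d).
Proof.
  intros HBT Hcones. pose proof T_tree as [Tnorm _].
  apply (countable_pred_fibers _ _ (restr O lt d) (level O T d)).
  - intros x [Bx Hx]. split; [|reflexivity].
    apply (tree_le_closed O lt T _ x); auto using restr_normalized, restr_le.
  - apply T_levels.
  - intros r Hr. apply (countable_pred_sub _ _ _ (Hcones r Hr)).
    intros x [[Bx Hx] <-]. split; auto using restr_le.
Qed.

Lemma aronszajn_split (B : node O -> Prop) :
  subset O B T -> uncountable O B ->
  exists u v, norm u /\ norm v /\ ~ comparable O lt u v /\
    uncountable O (cone O lt B u) /\ uncountable O (cone O lt B v).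
Proof.
  intros HBT HB. apply NNPP. intros Hno.
  pose (rich := fun x => T x /\ uncountable O (cone O lt B x)).
  assert (Hrich : countable O rich).
  { pose proof T_tree as [Tnorm _]. apply T_chains; [intros x [Tx _]; exact Tx|].
    intros x y [Tx Ux] [Ty Uy]. apply NNPP. intros Hc. apply Hno. exists x, y. auto 6. }
  destruct (omega1_bounded fst rich Hrich) as [d Hd].
  apply HB, (countable_pred_sub _ _ (fun x => (T x /\ lt (fst x) d) \/ (B x /\ ~ lt (fst x) d))).
  - apply countable_pred_or; [apply tree_below_height_countable|].
    apply tree_above_height_countable; auto.
    intros r [Tr Er]. apply NNPP. intros Hu.
    apply (lt_irrefl d). rewrite <- Er at 1. apply Hd. split; auto.
  - intros x Bx. destruct (classic (lt (fst x) d)); auto.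
Qed.

Lemma meet_below_cone (B : node O -> Prop) :
  subset O B T -> uncountable O B ->
  exists c u, norm u /\ nlt c u /\ uncountable O (cone O lt B u) /\
    exists a b, B a /\ B b /\ a <> b /\ is_meet O lt a b c.
Proof.
  intros HBT HB. pose proof T_tree as [Tnorm _].
  destruct (aronszajn_split B) as [u [v [Nu [Nv [Huv [Hu Hv]]]]]]; auto.
  destruct (uncountable_pred_inhabited _ _ Hu) as [a [Ba Hua]].
  destruct (uncountable_pred_inhabited _ _ Hv) as [b [Bb Hvb]].
  destruct (meet_exists O lt lt_irrefl lt_trans lt_total a b) as [c Hc]; auto.
  pose proof Hc as [Nc [Hca [Hcb _]]].
  exists c, u. split; [exact Nu|]. split; [|split; [exact Hu|]].
  - destruct (node_le_common_comparable O lt lt_trans lt_total c u a) as [<-|[L|L]];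
      auto; exfalso; apply Huv.
    + apply (node_le_common_comparable O lt lt_trans lt_total c v b); auto.
    + apply (node_le_common_comparable O lt lt_trans lt_total u v b); auto.
      apply (node_le_trans O lt lt_trans u c b); auto. right; exact L.
  - exists a, b. split; [|split; [|split]]; auto. intros <-. apply Huv.
    apply (node_le_common_comparable O lt lt_trans lt_total u v a); auto.
Qed.

Definition meet_stage (A : node O -> Prop) (c : node O) (B : node O -> Prop) : Prop :=
  subset O B A /\ uncountable O B /\
  (exists a b, A a /\ A b /\ a <> b /\ is_meet O lt a b c) /\
  exists u, norm u /\ nlt c u /\ forall x, B x -> nle u x.

Lemma meet_stage_within (A B : node O -> Prop) :
  subset O A T -> subset O B A -> uncountable O B ->
  exists c B', meet_stage A c B' /\ exists a b, B a /\ B b /\ is_meet O lt a b c.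
Proof.
  intros HAT HBA HB.
  destruct (meet_below_cone B) as [c [u [Nu [Hcu [Hu [a [b [Ba [Bb [Hab Hc]]]]]]]]]].
  { intros x Bx. auto. } { exact HB. }
  exists c, (cone O lt B u). split; [|exists a, b; auto].
  split; [intros x [Bx _]; auto|]. split; [exact Hu|].
  split; [exists a, b; auto|]. exists u. split; [|split]; auto. intros x [_ Hx]; exact Hx.
Qed.

(* All later meets come from elements of B, hence lie above the node u of the stage. *)
Lemma meet_stage_next (A : node O -> Prop) c B :
  subset O A T -> meet_stage A c B -> exists c' B', meet_stage A c' B' /\ nlt c c'.
Proof.
  intros HAT [HBA [HB [_ [u [Nu [Hcu Hup]]]]]].
  destruct (meet_stage_within A B) as [c' [B' [Hst [a [b [Ba [Bb [_ [_ [_ Hmax]]]]]]]]]]; auto.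
  exists c', B'. split; auto.
  apply (node_lt_le_trans O lt lt_trans c u c'); auto.
Qed.

Lemma meet_stage_in_tree (A : node O -> Prop) c B :
  subset O A T -> meet_stage A c B -> T c.
Proof.
  intros HAT [_ [_ [[a [_ [Aa [_ [_ [Nc [Hca _]]]]]]] _]]].
  apply (tree_le_closed O lt T c a); auto.
Qed.

End Aronszajn.

Theorem lemma1 (O : Type) (lt : O -> O -> Prop) (HO : is_omega1 O lt)
  (T : node O -> Prop) (HT : aronszajn O lt T)
  (A : node O -> Prop) (HAT : subset O A T) (HA : is_antichain O lt A)
  (HAunc : uncountable O A) :
  exists C : node O -> Prop,
    subset O C T /\ is_chain O lt C /\ infinite O C /\
    (forall c, C c -> exists a b, A a /\ A b /\ a <> b /\ is_meet O lt a b c).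
Proof.
  pose proof HO as [Hirr [Htrans _]].
  destruct (meet_stage_within O lt HO T HT A A) as [c0 [B0 [Hstage0 _]]]; auto.
  { intros x Ax; exact Ax. }
  destruct (dependent_choice_on (fun p => meet_stage O lt A (fst p) (snd p))
    (fun p q => node_lt O lt (fst p) (fst q)) (c0, B0)) as [f Hf]; auto.
  { intros [c B] Hst. destruct (meet_stage_next O lt HO T HT A c B) as [c' [B' Hnext]]; auto.
    exists (c', B'). exact Hnext. }
  destruct (increasing_range_infinite_chain O lt Hirr Htrans (fun n => fst (f n)))
    as [Hchain Hinf]; [apply Hf|].
  exists (fun x => exists n, x = fst (f n)). split; [|split; [|split]]; auto.
  - intros x [n ->]. apply (meet_stage_in_tree O lt T HT A _ (snd (f n))); auto. apply Hf.
  - intros x [n ->]. apply Hf.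
Qed.
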